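(* Let $f\in\mathcal F^{\,r}_{op}$ and let $k$ satisfy $1\le k<\frac{1}{2f(0)}$. Then the inequality $I^{SLD}_\rho(A)\le k\,I^f_\rho(A)$ does not hold for all $n$, all faithful $\rho\in\mathcal D^1_n$ and all self-adjoint $A\in M_n(\mathbb C)$; i.e. there exist $n$, a faithful $\rho\in\mathcal D^1_n$ and a self-adjoint $A$ with $I^{SLD}_\rho(A)>k\,I^f_\rho(A)$. Thus the constant $\frac{1}{2f(0)}$ in $I^{SLD}_\rho(A)\le\frac{1}{2f(0)}I^f_\rho(A)$ is optimal.
   Context: $\mathcal F_{op}$ is the class of functions $f:(0,\infty)\to(0,\infty)$ that are operator monotone, satisfy $f(1)=1$ and $tf(t^{-1})=f(t)$ for all $t>0$. $f(0):=\lim_{x\to0^+}f(x)$, and $\mathcal F^{\,r}_{op}=\{f\in\mathcal F_{op}: f(0)\neq0\}$. $\mathcal D_n^1$ is the set of strictly positive $n\times n$ density matrices. For $x,y>0$, $m_f(x,y)=xf(y/x)$; $L_\rho(X)=\rho X$, $R_\rho(X)=X\rho$, and $m_f(L_\rho,R_\rho)$ multiplies the entry $X_{ij}$ of $X$ (in an orthonormal eigenbasis of $\rho$ with eigenvalues $\lambda_i$) by $m_f(\lambda_i,\lambda_j)$. $\|X\|^2_{\rho,f}=\mathrm{Tr}\big(X^* m_f(L_\rho,R_\rho)^{-1}(X)\big)$. The $f$-information is $I^f_\rho(A)=\frac{f(0)}{2}\|i[\rho,A]\|^2_{\rho,f}$, and $I^{SLD}_\rho:=I^{f_{SLD}}_\rho$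 with $f_{SLD}(x)=\frac{1+x}{2}$. *)

From HB Require Import structures.
From mathcomp Require Import all_boot all_order all_algebra.
From mathcomp Require Import complex.
From mathcomp Require Import all_classical all_reals all_analysis.
Set Implicit Arguments. Unset Strict Implicit. Unset Printing Implicit Defensive.
Import Order.TTheory GRing.Theory Num.Theory.
Import numFieldNormedType.Exports.
Local Open Scope classical_set_scope.
Local Open Scope ring_scope.

Section Defs.
Variable R : realType.
Local Notation C := R[i].

Definition rC (x : R) : C := Complex x 0.

Definition adj n m (M : 'M[C]_(n, m)) : 'M[C]_(m, n) :=
  \matrix_(i, j) Num.conj (M j i).

Definition herm_mx n (M : 'M[C]_n) : Prop := adj M = M.
Definition unitary_mx n (U : 'M[C]_n) : Prop := U *m adj U = 1%:M.

(* positive semidefinite: <x, M x> is a nonnegative real for every x *)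
Definition psd n (M : 'M[C]_n) : Prop :=
  forall x : 'cV[C]_n, 0 <= (adj x *m M *m x) 0 0.

Definition loewner n (A B : 'M[C]_n) : Prop := psd (B - A).

Definition spec_mx n (U : 'M[C]_n) (a : 'I_n -> R) : 'M[C]_n :=
  U *m diag_mx (\row_i rC (a i)) *m adj U.

(* f : (0,oo) -> (0,oo) is operator monotone: for all n and all positive
   definite A = U diag(a) U^*, B = V diag(b) V^* (U, V unitary_mx, a, b > 0),
   A <= B implies f(A) = U diag(f a) U^* <= V diag(f b) V^* = f(B). *)
Definition operator_monotone (f : R -> R) : Prop :=
  forall n (U V : 'M[C]_n) (a b : 'I_n -> R),
    unitary_mx U -> unitary_mx V -> (forall i, 0 < a i) -> (forall i, 0 < b i) ->
    loewner (spec_mx U a) (spec_mx V b) ->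
    loewner (spec_mx U (f \o a)) (spec_mx V (f \o b)).

Definition F_op (f : R -> R) : Prop :=
  (forall x, 0 < x -> 0 < f x) /\ operator_monotone f /\ f 1 = 1 /\
  (forall t, 0 < t -> t * f t^-1 = f t).

Definition f0 (f : R -> R) : R := lim (f @ 0^'+).

Definition F_op_r (f : R -> R) : Prop := F_op f /\ f0 f != 0.

Definition f_SLD (x : R) : R := (1 + x) / 2.

Definition m_f (f : R -> R) (x y : R) : R := x * f (y / x).

(* A faithful density matrix rho is given together with an orthonormal
   eigenbasis: rho = U diag(lam) U^*, U unitary_mx, lam_i > 0, sum lam_i = 1. *)
Definition faithful_density n (U : 'M[C]_n) (lam : 'I_n -> R) : Prop :=
  unitary_mx U /\ (forall i, 0 < lam i) /\ \sum_i lam i = 1.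

Definition rho_of n (U : 'M[C]_n) (lam : 'I_n -> R) : 'M[C]_n := spec_mx U lam.

(* m_f(L_rho, R_rho)^{-1}(X): in the eigenbasis of rho (columns of U),
   entry X_ij is divided by m_f(lam_i, lam_j). *)
Definition mf_inv (f : R -> R) n (U : 'M[C]_n) (lam : 'I_n -> R)
  (X : 'M[C]_n) : 'M[C]_n :=
  let Y := adj U *m X *m U in
  U *m (\matrix_(i, j) (Y i j / rC (m_f f (lam i) (lam j)))) *m adj U.

Definition fnorm2 (f : R -> R) n (U : 'M[C]_n) (lam : 'I_n -> R)
  (X : 'M[C]_n) : C :=
  \tr (adj X *m mf_inv f U lam X).

Definition f_info (f : R -> R) n (U : 'M[C]_n) (lam : 'I_n -> R)
  (A : 'M[C]_n) : C :=
  let rho := rho_of U lam in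
  rC (f0 f / 2) * fnorm2 f U lam ('i *: (rho *m A - A *m rho)).

Definition SLD_info n (U : 'M[C]_n) (lam : 'I_n -> R) (A : 'M[C]_n) : C :=
  f_info f_SLD U lam A.

End Defs.

(* Take rho = diag(a, b) with a + b = 1 and A the off-diagonal Pauli matrix.
   Then I^SLD_rho(A) = (a - b)^2, while the symmetry t f(1/t) = f t gives
   I^f_rho(A) = f(0) (a - b)^2 / m_f(a, b), and monotonicity with f(1) = 1 gives
   m_f(a, b) = b f(a/b) >= b for b < a.  Choosing k f(0) < b < 1/2 therefore
   makes k I^f_rho(A) < I^SLD_rho(A). *)
From HB Require Import structures.
From mathcomp Require Import all_boot all_order all_algebra.
From mathcomp Require Import complex.
From mathcomp Require Import all_classical all_reals all_analysis.
From mathcomp Require Import ring lra.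
Set Implicit Arguments. Unset Strict Implicit. Unset Printing Implicit Defensive.
Import Order.TTheory GRing.Theory Num.Theory.
Import numFieldNormedType.Exports.
Local Open Scope classical_set_scope.
Local Open Scope ring_scope.

Section TwoLevel.
Variable R : realType.
Local Open Scope complex_scope.

Lemma rCE (x : R) : rC x = x%:C.
Proof. by []. Qed.

Lemma adj1 n : adj (1%:M : 'M[R[i]]_n) = 1%:M.
Proof. by apply/matrixP => i j; rewrite !mxE -[Num.conj _]/(_^*)%C conjc_nat eq_sym. Qed.

Lemma unitary_mx1 n : unitary_mx (1%:M : 'M[R[i]]_n).
Proof. by rewrite /unitary_mx adj1 mul1mx. Qed.

Lemma quad_form_spec_mx1 (c d : 'I_1 -> R) (x : 'cV[R[i]]_1) :
  (adj x *m (spec_mx 1%:M c - spec_mx 1%:M d) *m x) 0 0 =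
  (c 0 - d 0)%:C * ((x 0 0)^* * x 0 0).
Proof.
rewrite /spec_mx adj1 !mul1mx !mulmx1.
rewrite !(big_ord_recr, big_ord0, mxE) /= ?mxE /= !(mulr1n, add0r) !rCE.
have -> : (ord_max : 'I_1) = 0 by apply/val_inj.
by rewrite rmorphB /=; ring.
Qed.

Lemma loewner_spec_mx1 (c d : 'I_1 -> R) :
  loewner (spec_mx 1%:M c) (spec_mx 1%:M d) <-> c 0 <= d 0.
Proof.
split=> [|cd x].
  by move=> /(_ (const_mx 1)); rewrite quad_form_spec_mx1 mxE; simpc; rewrite subr_ge0.
rewrite quad_form_spec_mx1; case: (x 0 0) => p q; simpc.
apply/andP; split; first by rewrite [q * p]mulrC subrr mulr0.
by apply: mulr_ge0; [rewrite subr_ge0 | nra].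
Qed.

Lemma operator_monotone_le (f : R -> R) (s t : R) :
  operator_monotone f -> 0 < s -> s <= t -> f s <= f t.
Proof.
move=> fmono s_gt0 st.
have t_gt0 : 0 < t := lt_le_trans s_gt0 st.
apply: (proj1 (loewner_spec_mx1 (f \o fun=> s) (f \o fun=> t))).
apply: (fmono 1%N _ _ _ _ (unitary_mx1 1) (unitary_mx1 1)) => //.
exact/loewner_spec_mx1.
Qed.

Definition diag2 (a b : R) : 'I_2 -> R :=
  fun i => if (i : nat) == 0%N then a else b.

Definition pauliX : 'M[R[i]]_2 := \matrix_(i, j) if (i : nat) == j then 0 else 1.

Lemma herm_pauliX : herm_mx pauliX.
Proof.
by apply/matrixP => i j; rewrite !mxE eq_sym; case: ifP; rewrite ?(rmorph0, rmorph1).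
Qed.

Lemma faithful_density_diag2 a b : 0 < a -> 0 < b -> a + b = 1 ->
  faithful_density (1%:M : 'M[R[i]]_2) (diag2 a b).
Proof.
move=> a_gt0 b_gt0 ab1; split; first exact: unitary_mx1.
split; first by move=> i; rewrite /diag2; case: ifP.
by rewrite !(big_ord_recr, big_ord0) /= add0r.
Qed.

Lemma f_info_diag2 g a b : f_info g 1%:M (diag2 a b) pauliX =
  (f0 g / 2 * ((a - b) ^+ 2 * ((m_f g a b)^-1 + (m_f g b a)^-1)))%:C.
Proof.
rewrite /f_info /fnorm2 /mf_inv /rho_of /spec_mx adj1 !mul1mx !mulmx1.
rewrite /mxtrace !(big_ord_recr, big_ord0, mxE) /= /diag2 /pauliX ?mxE /=.
rewrite !(mulr1n, mulr0n, mulr0, mul0r, mulr1, mul1r, addr0, add0r, subr0, sub0r).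
by rewrite !rCE -!fmorphV; simpc; congr (_ +i* _); ring.
Qed.

Lemma m_f_sym (f : R -> R) a b : 0 < a -> 0 < b ->
  (forall t, 0 < t -> t * f t^-1 = f t) -> m_f f b a = m_f f a b.
Proof.
move=> a_gt0 b_gt0 fsym; rewrite /m_f -[f (b / a)]fsym ?divr_gt0 // invf_div.
by field; rewrite gt_eqF.
Qed.

Lemma m_f_ge (f : R -> R) a b : 0 < b -> b <= a ->
  (forall t, 0 < t -> t * f t^-1 = f t) -> operator_monotone f -> f 1 = 1 ->
  b <= m_f f a b.
Proof.
move=> b_gt0 ba fsym fmono f1.
have a_gt0 := lt_le_trans b_gt0 ba.
rewrite -m_f_sym // /m_f -[X in X <= _]mulr1 ler_pM2l // -f1.
by apply: operator_monotone_le; rewrite // ler_pdivlMr // mul1r.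
Qed.

Lemma f_info_diag2_sym (f : R -> R) a b : 0 < a -> 0 < b ->
  (forall t, 0 < t -> t * f t^-1 = f t) ->
  f_info f 1%:M (diag2 a b) pauliX = (f0 f * (a - b) ^+ 2 / m_f f a b)%:C.
Proof.
move=> a_gt0 b_gt0 fsym; rewrite f_info_diag2 [m_f f b a]m_f_sym //.
by congr (_%:C); set y := (m_f f a b)^-1; field.
Qed.

Lemma f0_SLD : f0 (@f_SLD R) = 2^-1.
Proof.
have : @f_SLD R @ 0^'+ --> ((1 + 0) / 2 : R).
  apply: cvg_at_right_filter; apply: cvgM; last exact: cvg_cst.
  by apply: cvgD; [exact: cvg_cst | exact: cvg_id].
by rewrite addr0 mul1r; apply: cvg_lim.
Qed.

Lemma SLD_info_diag2 a b : 0 < a -> 0 < b -> a + b = 1 ->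
  SLD_info 1%:M (diag2 a b) pauliX = ((a - b) ^+ 2)%:C.
Proof.
move=> a_gt0 b_gt0 ab1; rewrite /SLD_info f_info_diag2_sym //; last first.
  by move=> t t_gt0; rewrite /f_SLD; field; rewrite gt_eqF.
rewrite f0_SLD /m_f /f_SLD; congr (_%:C).
have -> : a * ((1 + b / a) / 2) = (a + b) / 2 by field; rewrite gt_eqF.
by rewrite ab1; field.
Qed.

End TwoLevel.

Theorem mainTheorem7 (R : realType) (f : R -> R) (k : R) :
  F_op_r f -> 1 <= k -> k < (2 * f0 f)^-1 ->
  exists (n : nat) (U : 'M[complex R]_n) (lam : 'I_n -> R) (A : 'M[complex R]_n),
    faithful_density U lam /\ herm_mx A /\
    rC k * f_info f U lam A < SLD_info U lam A.
Proof.
move=> [[_ [fmono [f1 fsym]]] f0_neq0] k_ge1 k_lt.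
have f0_gt0 : 0 < f0 f.
  rewrite lt_neqAle eq_sym f0_neq0 leNgt; apply/negP => f0_lt0.
  have : (2 * f0 f)^-1 < 0 by rewrite invr_lt0 pmulr_rlt0.
  lra.
have kf0_lt : k * f0 f < 2^-1.
  by move: k_lt; rewrite -(ltr_pM2r (_ : 0 < 2 * f0 f)) ?mulVf ?gt_eqF; lra.
pose b := (k * f0 f + 2^-1) / 2; pose a := 1 - b.
have kf0_gt0 : 0 < k * f0 f by apply: mulr_gt0; lra.
have [b_gt0 ba ab1 kf0_b] : [/\ 0 < b, b < a, a + b = 1 & k * f0 f < b].
  by rewrite /a /b; split; lra.
have a_gt0 := lt_trans b_gt0 ba.
have m_ge : b <= m_f f a b by apply: m_f_ge; rewrite ?ltW.
exists 2%N, 1%:M, (diag2 a b), (pauliX R).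
split; first exact: faithful_density_diag2.
split; first exact: herm_pauliX.
rewrite SLD_info_diag2 ?f_info_diag2_sym // rCE -rmorphM ltcR.
have d_gt0 : 0 < (a - b) ^+ 2 by rewrite exprn_gt0 // subr_gt0.
rewrite mulrA ltr_pdivrMr ?(lt_le_trans b_gt0) //.
by rewrite mulrA [X in _ < X]mulrC ltr_pM2r //; lra.
Qed.
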